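(* Let $L$ be a localization functor on the category of abelian groups and $D$ an abelian group. If $\bigoplus_\kappa D$ is $L$-local for some infinite cardinal $\kappa$, then $\bigoplus_\kappa D$ is $L$-local for every infinite cardinal $\kappa$.
   Context: All groups are abelian. A localization is a functor $L:\mathcal{Ab}\to\mathcal{Ab}$ with a natural transformation $a:\mathrm{Id}\to L$ such that for every group $X$ we have $a_{LX}=La_X$ and $a_{LX}:LX\to LLX$ is an isomorphism. A group $X$ is $L$-local if $a_X$ is an isomorphism. *)

(* Abelian groups are modelled as [zmodType]s, group
   homomorphisms as [{additive A -> B}]. *)
From HB Require Import structures.
From mathcomp Require Import all_boot all_order all_algebra.
From Stdlib Require Import Classical ClassicalEpsilon FunctionalExtensionality
  ProofIrrelevance List.
Set Implicit Arguments. Unset Strict Implicit. Unset Printing Implicit Defensive.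
Import GRing.Theory.
Local Open Scope ring_scope.

Record localization := Localization {
  Lobj : zmodType -> zmodType;
  Lmap : forall A B : zmodType, {additive A -> B} -> {additive Lobj A -> Lobj B};
  Lmap_id : forall A : zmodType, Lmap (A:=A) (B:=A) idfun =1 idfun;
  Lmap_comp : forall (A B C : zmodType) (f : {additive A -> B}) (g : {additive B -> C}),
      Lmap (g \o f) =1 Lmap g \o Lmap f;
  La : forall A : zmodType, {additive A -> Lobj A};
  La_natural : forall (A B : zmodType) (f : {additive A -> B}),
      Lmap f \o La A =1 La B \o f;
  La_idem : forall A : zmodType, La (Lobj A) =1 Lmap (La A);
  La_iso : forall A : zmodType, bijective (La (Lobj A))
}.

Definition is_local (L : localization) (X : zmodType) : Prop :=
  bijective (La L X).

(* An infinite index set (a representative of an infinite cardinal). *)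
Definition infinite_type (I : Type) : Prop :=
  ~ exists s : list I, forall i : I, In i s.

(* Direct sum of I copies of D: finitely supported functions I -> D.   *)
Section DSum.
Variables (I : Type) (D : zmodType).

Definition finsupp (f : I -> D) : Prop :=
  exists s : list I, forall i, ~ In i s -> f i = 0.

Record dsum := DSum { dsum_fun :> I -> D; dsum_fin : finsupp dsum_fun }.

Lemma dsum_ext (x y : dsum) : (forall i, x i = y i) -> x = y.
Proof.
case: x => f hf; case: y => g hg /= H.
have E : f = g by apply: functional_extensionality.
subst g; by rewrite (proof_irrelevance _ hf hg).
Qed.

Definition dsum_eqb (x y : dsum) : bool :=
  if excluded_middle_informative (x = y) then true else false.
Lemma dsum_eqP : Equality.axiom dsum_eqb.
Proof.
move=> x y; rewrite /dsum_eqb.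
case: excluded_middle_informative => h; [exact: ReflectT | exact: ReflectF].
Qed.
HB.instance Definition _ := hasDecEq.Build dsum dsum_eqP.

Definition dsum_find (P : pred dsum) (n : nat) : option dsum :=
  match excluded_middle_informative (exists x, P x) with
  | left h => Some (proj1_sig (constructive_indefinite_description _ h))
  | right _ => None
  end.
Lemma dsum_find_some P n x : dsum_find P n = Some x -> P x.
Proof.
rewrite /dsum_find; case: excluded_middle_informative => // h [<-].
exact: proj2_sig (constructive_indefinite_description _ h).
Qed.
Lemma dsum_find_ex (P : pred dsum) : (exists x, P x) -> exists n, dsum_find P n.
Proof.
move=> h; exists 0%N; rewrite /dsum_find.
by case: excluded_middle_informative.
Qed.
Lemma dsum_find_ext (P Q : pred dsum) : P =1 Q -> dsum_find P =1 dsum_find Q.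
Proof.
move=> H n; have E : P = Q by apply: functional_extensionality.
by subst.
Qed.
HB.instance Definition _ := hasChoice.Build dsum dsum_find_some dsum_find_ex dsum_find_ext.

Lemma finsupp0 : finsupp (fun _ => 0).
Proof. by exists nil. Qed.
Lemma finsuppN (x : dsum) : finsupp (fun i => - x i).
Proof.
case: x => f [s hs]; exists s => i hi /=; by rewrite hs // oppr0.
Qed.
Lemma finsuppD (x y : dsum) : finsupp (fun i => x i + y i).
Proof.
case: x => f [s hs]; case: y => g [t ht]; exists (s ++ t) => i hi /=.
rewrite hs ?ht ?addr0 // => H; apply: hi; apply: in_or_app; tauto.
Qed.

Definition dsum0 := DSum finsupp0.
Definition dsumN x := DSum (finsuppN x).
Definition dsumD x y := DSum (finsuppD x y).

Lemma dsumA : associative dsumD.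
Proof. by move=> x y z; apply: dsum_ext => i /=; rewrite addrA. Qed.
Lemma dsumC : commutative dsumD.
Proof. by move=> x y; apply: dsum_ext => i /=; rewrite addrC. Qed.
Lemma dsum0l : left_id dsum0 dsumD.
Proof. by move=> x; apply: dsum_ext => i /=; rewrite add0r. Qed.
Lemma dsumNl : left_inverse dsum0 dsumN dsumD.
Proof. by move=> x; apply: dsum_ext => i /=; rewrite addNr. Qed.
HB.instance Definition _ := GRing.isZmodule.Build dsum dsumA dsumC dsum0l dsumNl.

End DSum.

(* If (+)_K D is local for one infinite K, then so is (+)_nat D, being a retract
   of it, and hence so is D.  Conversely, if (+)_nat D is local, then for every K,
   finite or not, the coordinate projections of (+)_K D extend along a to maps
   pi_i : L((+)_K D) -> D.  For a fixed z the family (pi_i z) has finite support: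
   were pi_(e n) z nonzero for an injective sequence e, the restriction
   (+)_K D -> (+)_nat D along e would extend to h : L((+)_K D) -> (+)_nat D with
   h z n = pi_(e n) z for all n, contradicting the finite support of h z.  Thus
   z |-> (pi_i z)_i retracts a onto (+)_K D, which is therefore local as a retract
   of a local group. *)

From HB Require Import structures.
From mathcomp Require Import all_boot all_order all_algebra.
From Stdlib Require Import Classical ClassicalEpsilon FunctionalExtensionality
  ProofIrrelevance List.
Set Implicit Arguments. Unset Strict Implicit. Unset Printing Implicit Defensive.
Import GRing.Theory.
Local Open Scope ring_scope.

Lemma additive_ext (A B : zmodType) (f g : {additive A -> B}) : f =1 g -> f = g.
Proof.
case: f => f cf; case: g => g cg /= fg.
have E : f = g := functional_extensionality _ _ fg.
subst g; case: cf => [[pf]]; case: cg => [[pg]].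
by rewrite (proof_irrelevance _ pf pg).
Qed.

Section Localization.
Variable L : localization.

Lemma Lmap_ext (A B : zmodType) (f g : {additive A -> B}) :
  f =1 g -> Lmap L f =1 Lmap L g.
Proof. by move/additive_ext->. Qed.

Lemma LmapE (A B : zmodType) (f : {additive A -> B}) x :
  Lmap L f (La L A x) = La L B (f x).
Proof. exact: La_natural. Qed.

Lemma Lmap_compE (A B C : zmodType) (f : {additive A -> B}) (g : {additive B -> C}) z :
  Lmap L g (Lmap L f z) = Lmap L (g \o f) z.
Proof. by rewrite Lmap_comp. Qed.

Lemma local_retract (X Y : zmodType) (i : {additive Y -> X}) (r : {additive X -> Y}) :
  cancel i r -> is_local L X -> is_local L Y.
Proof.
move=> iK [aX_inv aXK aXKV].
exists (r \o aX_inv \o Lmap L i) => [y | z] /=.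
  by rewrite LmapE aXK iK.
rewrite -LmapE aXKV Lmap_compE.
have ri_id : (r \o i : {additive Y -> Y}) =1 (idfun : {additive Y -> Y}) by [].
by rewrite (Lmap_ext ri_id) Lmap_id.
Qed.

Section LocalTarget.
Variables (Y : zmodType) (HY : is_local L Y).

Lemma local_lift_unique (X : zmodType) (f g : {additive Lobj L X -> Y}) :
  (forall x, f (La L X x) = g (La L X x)) -> f =1 g.
Proof.
move=> fg z; apply: (bij_inj HY).
rewrite -!LmapE !La_idem !Lmap_compE; exact: Lmap_ext.
Qed.

Let local_inv_spec : exists g, cancel (La L Y) g /\ cancel g (La L Y).
Proof. by case: HY => g; exists g. Qed.

Definition local_inv : Lobj L Y -> Y :=
  proj1_sig (constructive_indefinite_description _ local_inv_spec).

Lemma local_invK : cancel (La L Y) local_inv.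
Proof. exact: (proj2_sig (constructive_indefinite_description _ local_inv_spec)).1. Qed.

Lemma local_invKV : cancel local_inv (La L Y).
Proof. exact: (proj2_sig (constructive_indefinite_description _ local_inv_spec)).2. Qed.

HB.instance Definition _ := GRing.isZmodMorphism.Build _ _ local_inv
  (can2_zmod_morphism local_invK local_invKV).

Definition local_lift (X : zmodType) (f : {additive X -> Y}) :
  {additive Lobj L X -> Y} := local_inv \o Lmap L f.

Lemma local_liftE (X : zmodType) (f : {additive X -> Y}) x :
  local_lift f (La L X x) = f x.
Proof. by rewrite /= LmapE local_invK. Qed.

End LocalTarget.
End Localization.

Lemma infinite_type_fresh (I : Type) :
  infinite_type I -> forall s : list I, exists i, ~ In i s.
Proof.
move=> infI s; apply: NNPP => all_in; apply: infI; exists s => i.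
by apply: NNPP => i_notin; apply: all_in; exists i.
Qed.

Lemma infinite_type_nat : infinite_type nat.
Proof.
case=> s all_in; have /(proj1 (list_max_le s _)) /Forall_forall bound := le_n (list_max s).
by move: (bound _ (all_in (list_max s).+1)) => /leP; rewrite ltnn.
Qed.

Lemma exists_injective_nat (T : Type) (P : T -> Prop) :
  (forall s : list T, exists t, P t /\ ~ In t s) ->
  exists e : nat -> T, injective e /\ forall n, P (e n).
Proof.
move=> fresh.
pose next s := proj1_sig (constructive_indefinite_description _ (fresh s)).
have nextP s : P (next s) /\ ~ In (next s) s :=
  proj2_sig (constructive_indefinite_description _ (fresh s)).
pose fix prefix n := if n is m.+1 then next (prefix m) :: prefix m else nil.
have in_prefix m n : (m < n)%N -> In (next (prefix m)) (prefix n).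
  elim: n => [//|n IHn]; rewrite ltnS leq_eqVlt => /orP[/eqP-> | lt_mn] /=.
    by left.
  by right; apply: IHn.
exists (fun n => next (prefix n)); split=> [m n /= e_mn | n]; last exact: (nextP _).1.
case: (ltngtP m n) => // [lt_mn | lt_nm].
  by case: (nextP (prefix n)) => _ []; rewrite -e_mn; apply: in_prefix.
by case: (nextP (prefix m)) => _ []; rewrite e_mn; apply: in_prefix.
Qed.

Lemma infinite_type_injection (I : Type) :
  infinite_type I -> exists e : nat -> I, injective e.
Proof.
move=> /infinite_type_fresh fresh.
have [|e [e_inj _]] := @exists_injective_nat I (fun _ => True); last by exists e.
by move=> s; have [i ?] := fresh s; exists i.
Qed.

Lemma injective_preimage_list (I J : Type) (e : I -> J) :
  injective e -> forall s : list J, exists t : list I, forall i, In (e i) s -> In i t.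
Proof.
move=> e_inj; elim=> [|j s [t Ht]]; first by exists nil.
case: (classic (exists i, e i = j)) => [[i0 <-] | no_pre].
  by exists (i0 :: t) => i /= [/e_inj-> | /Ht]; [left | right].
by exists t => i /= [eij | /Ht//]; case: no_pre; exists i.
Qed.

Definition partial_inv (I J : Type) (c : I -> J) (j : J) : option I :=
  match excluded_middle_informative (exists i, c i = j) with
  | left pre => Some (proj1_sig (constructive_indefinite_description _ pre))
  | right _ => None
  end.

Lemma partial_invK (I J : Type) (c : I -> J) :
  injective c -> forall i, partial_inv c (c i) = Some i.
Proof.
move=> c_inj i; rewrite /partial_inv; case: excluded_middle_informative => [pre | []].
  by congr Some; apply: c_inj; exact: proj2_sig (constructive_indefinite_description _ pre).
by exists i.
Qed.

Lemma partial_inv_Some (I J : Type) (c : I -> J) j i :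
  partial_inv c j = Some i -> c i = j.
Proof.
rewrite /partial_inv; case: excluded_middle_informative => // pre [<-].
exact: proj2_sig (constructive_indefinite_description _ pre).
Qed.

Section DSumMaps.
Variable D : zmodType.

Lemma dsumBE (I : Type) (x y : dsum I D) i : (x - y) i = x i - y i.
Proof. by []. Qed.

Definition dsum_proj (I : Type) (i : I) (x : dsum I D) : D := x i.

HB.instance Definition _ (I : Type) (i : I) :=
  GRing.isZmodMorphism.Build (dsum I D) D (dsum_proj i) (fun x y => dsumBE x y i).

Lemma finsupp_single (n : nat) (d : D) : finsupp (fun m => if m == n then d else 0).
Proof. by exists [:: n] => m /=; case: eqP => // ->; case; left. Qed.

Definition dsum_single (n : nat) (d : D) : dsum nat D := DSum (finsupp_single n d).

Fact dsum_single_zmod_morphism (n : nat) : {morph dsum_single n : x y / x - y}.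
Proof. by move=> x y; apply: dsum_ext => m /=; case: eqP; rewrite ?subr0. Qed.

HB.instance Definition _ (n : nat) := GRing.isZmodMorphism.Build D (dsum nat D)
  (dsum_single n) (dsum_single_zmod_morphism n).

Lemma dsum_singleK (n : nat) : cancel (dsum_single n) (dsum_proj n).
Proof. by move=> d; rewrite /dsum_proj /= eqxx. Qed.

Section Restrict.
Variables (I J : Type) (e : I -> J) (e_inj : injective e).

Lemma finsupp_comp (f : J -> D) : finsupp f -> finsupp (f \o e).
Proof.
case=> s f0; have [t Ht] := injective_preimage_list e_inj s.
by exists t => i i_notin; apply: f0 => /Ht.
Qed.

Definition dsum_restrict (x : dsum J D) : dsum I D := DSum (finsupp_comp (dsum_fin x)).

Fact dsum_restrict_zmod_morphism : {morph dsum_restrict : x y / x - y}.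
Proof. by move=> x y; apply: dsum_ext. Qed.

HB.instance Definition _ := GRing.isZmodMorphism.Build (dsum J D) (dsum I D)
  dsum_restrict dsum_restrict_zmod_morphism.

End Restrict.

Section Extend.
Variables (I J : Type) (c : I -> J).

Lemma finsupp_extend (y : dsum I D) : finsupp (fun j => oapp y 0 (partial_inv c j)).
Proof.
have [s y0] := dsum_fin y; exists (List.map c s) => j j_notin.
case E: (partial_inv c j) => [i|] //=; apply: y0 => i_in; apply: j_notin.
by rewrite -(partial_inv_Some E); apply: in_map.
Qed.

Definition dsum_extend (y : dsum I D) : dsum J D := DSum (finsupp_extend y).

Fact dsum_extend_zmod_morphism : {morph dsum_extend : x y / x - y}.
Proof.
by move=> x y; apply: dsum_ext => j /=; case: (partial_inv c j); rewrite /= ?subr0.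
Qed.

HB.instance Definition _ := GRing.isZmodMorphism.Build (dsum I D) (dsum J D)
  dsum_extend dsum_extend_zmod_morphism.

Lemma dsum_extendK (c_inj : injective c) : cancel dsum_extend (dsum_restrict c_inj).
Proof. by move=> y; apply: dsum_ext => i /=; rewrite partial_invK. Qed.

End Extend.
End DSumMaps.

Section LocalDSum.
Variables (L : localization) (D : zmodType).

Lemma local_dsum_nat (J : Type) :
  infinite_type J -> is_local L (dsum J D) -> is_local L (dsum nat D).
Proof.
move=> /infinite_type_injection[c c_inj]; exact: local_retract (dsum_extendK (D:=D) c_inj).
Qed.

Hypothesis local_nat : is_local L (dsum nat D).

Lemma local_summand : is_local L D.
Proof. exact: local_retract (dsum_singleK (D:=D) 0) local_nat. Qed.

Variable K : Type.

Definition local_coord (i : K) : {additive Lobj L (dsum K D) -> D} :=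
  local_lift local_summand (dsum_proj (D:=D) i).

Lemma finsupp_local_coord z : finsupp (fun i => local_coord i z).
Proof.
apply: NNPP => infinite_supp.
have fresh_supp s : exists i, local_coord i z <> 0 /\ ~ In i s.
  apply: NNPP => supp_in_s; apply: infinite_supp; exists s => i i_notin.
  by apply: NNPP => coord_i; apply: supp_in_s; exists i.
have [e [e_inj coord_e]] := exists_injective_nat fresh_supp.
pose h := local_lift local_nat (dsum_restrict (D:=D) e_inj).
have h_coord n : (dsum_proj n \o h) z = local_coord (e n) z.
  apply: (local_lift_unique local_summand) => x; rewrite local_liftE.
  by rewrite -[LHS]/(dsum_proj n (h (La L _ x))) local_liftE.
have [s hz0] := dsum_fin (h z).
have [n n_notin] := infinite_type_fresh infinite_type_nat s.
by apply: (coord_e n); rewrite -h_coord /= /dsum_proj hz0.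
Qed.

Definition dsum_delocalize (z : Lobj L (dsum K D)) : dsum K D :=
  DSum (finsupp_local_coord z).

Fact dsum_delocalize_zmod_morphism : {morph dsum_delocalize : x y / x - y}.
Proof. by move=> x y; apply: dsum_ext => i; apply: raddfB. Qed.

HB.instance Definition _ := GRing.isZmodMorphism.Build _ _
  dsum_delocalize dsum_delocalize_zmod_morphism.

Lemma La_dsumK : cancel (La L (dsum K D)) dsum_delocalize.
Proof. by move=> x; apply: dsum_ext => i; apply: local_liftE. Qed.

Lemma local_dsum : is_local L (dsum K D).
Proof. exact: local_retract La_dsumK (La_iso L (dsum K D)). Qed.

End LocalDSum.

Theorem corollary2 (L : localization) (D : zmodType) :
  (exists (K : Type), infinite_type K /\ is_local L (dsum K D)) ->
  forall (K : Type), infinite_type K -> is_local L (dsum K D).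
Proof.
case=> J [infJ locJ] K _.
exact: local_dsum (local_dsum_nat infJ locJ) K.
Qed.
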